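(* Let $\Upsilon=1$ if $\xi_p\in N_{K/F}(K^\times)$ and $\Upsilon=0$ otherwise. (1) If $\Upsilon=1$, there exists $\delta\in K^\times$ with $[\delta]\in J_1$ and $e([\delta])\neq0$; moreover, the elements $\delta\in K^\times$ with $[\delta]\in J_1$ and $e([\delta])\ne 0$ are precisely those for which $K(\sqrt[p]{\delta})/F$ is a cyclic extension of degree $p^2$. (2) If $\Upsilon=0$, then $[\sqrt[p]{a}]\in J_2\setminus J_1$, $e([\sqrt[p]{a}])\neq0$, and $e([\gamma])=0$ for all $[\gamma]\in J_1$.
   Context: $p$ odd prime; $F$ a field containing a primitive $p$th root of unity $\xi_p$; $K=F(\sqrt[p]{a})$, $a\in F^\times$, cyclic of degree $p$; $G=\mathrm{Gal}(K/F)=\langle\sigma\rangle$ with $\sigma(\sqrt[p]{a})=\xi_p\sqrt[p]{a}$; $\rho=\sigma-1$. $J=K^\times/K^{\times p}$ as a multiplicative $\mathbb{F}_p[G]$-module, $[\gamma]$ the class of $\gamma$; $J_i=\ker(\rho^i)$ (note $J_1\subseteq J_2\subseteq J_{p-1}$ since $p\ge3$). For $[\gamma]\in J_{p-1}$, the index $e([\gamma])\in\mathbb{F}_p$ is defined by $\xi_p^{e([\gamma])}=\sigma(\delta)/\delta$ where $\delta\in K$ is any $p$th root of $N_{K/F}(\gamma)$. *)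

From HB Require Import structures.
From mathcomp Require Import all_boot all_order all_algebra all_fingroup all_solvable all_field.
From Stdlib Require Import ClassicalEpsilon.
Set Implicit Arguments. Unset Strict Implicit. Unset Printing Implicit Defensive.
Import GRing.Theory.
Local Open Scope ring_scope.

(* rho = sigma - 1, written multiplicatively on K^x : gamma |-> sigma(gamma)/gamma *)
Definition rho (F : fieldType) (L : splittingFieldType F) (K : {vspace L})
  (sigma : gal_of K) (x : L) : L := sigma x / x.

(* [gamma] \in J_i = ker(rho^i) on J = K^x / K^{x p}:
   rho^i(gamma) is a p-th power of an element of K. *)
Definition inJ (F : fieldType) (L : splittingFieldType F) (p : nat)
  (K : {vspace L}) (sigma : gal_of K) (i : nat) (gamma : L) : Prop :=
  exists2 eta, eta \in K & iter i (rho sigma) gamma = eta ^+ p.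

(* The index e([gamma]) in F_p = {0,...,p-1}: the e with
   xi^e = sigma(delta)/delta, where delta \in K is a p-th root of N_{K/F}(gamma). *)
Definition kindex (F : fieldType) (L : splittingFieldType F) (p : nat) (xi : F)
  (K : {vspace L}) (sigma : gal_of K) (gamma : L) : nat :=
  epsilon (inhabits 0%N) (fun e => (e < p)%N /\
     exists2 delta, delta \in K &
       delta ^+ p = galNorm 1%VS K gamma /\ sigma delta = (xi ^+ e)%:A * delta).

Definition cyclic_ext_of_degree (F : fieldType) (L : splittingFieldType F)
  (E : {vspace L}) (n : nat) : Prop :=
  [/\ galois 1%VS E, cyclic 'Gal(E / 1%VS) & \dim E = n].

(** Write z for xi viewed in L.  Since Gal(K/F) = <sigma> has order p, a class
    [g] in J_1, say sigma(g) = c^p g, has index determined by the norm of c: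
    d = g * prod_(i<p) c sigma(c) ... sigma^(i-1)(c) is a p-th root of N(g) with
    sigma(d) = N(c) d, so N(c) = z^e([g]).  Hence a class in J_1 of nonzero index
    exists iff some norm is a nontrivial p-th root of unity, i.e. iff xi is a
    norm (Hilbert 90 then produces the class); and alpha, with sigma(alpha) =
    z alpha, has index 1 because N(alpha) = alpha^p for odd p.
    For beta^p = delta in K, sigma extends to K(beta) iff sigma(beta) = c beta with
    c in K, and then sigma^p(beta) = N(c) beta.  If N(c) != 1 the extension has
    order p^2 >= dim K(beta), so K(beta)/F is cyclic of degree p^2.  Conversely,
    if K(beta)/F is cyclic, commutativity forces sigma(beta)/beta into K, and
    N(c) = 1 would put the order-p extension of sigma in Gal(K(beta)/K). *)

From HB Require Import structures.
From mathcomp Require Import all_boot all_order all_algebra all_fingroup all_solvable all_field.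
From Stdlib Require Import ClassicalEpsilon.

Set Implicit Arguments.
Unset Strict Implicit.
Unset Printing Implicit Defensive.
Import GRing.Theory.
Local Open Scope ring_scope.

Lemma big_cycle (R : Type) (idx : R) (op : Monoid.com_law idx) (gT : finGroupType)
    (x : gT) (f : gT -> R) :
  \big[op/idx]_(y in <[x]>%g) f y = \big[op/idx]_(i < #[x]%g) f (x ^+ i)%g.
Proof.
have ->: <[x]>%g = [set (x ^+ i)%g | i : 'I_#[x]%g].
  apply/setP => y; apply/cycleP/imsetP => [[i ->] | [i _ ->]]; last by exists i.
  by exists (Ordinal (ltn_pmod i (order_gt0 x))); rewrite //= expg_mod_order.
by rewrite big_imset // => i j _ _ /eqP; rewrite eq_expg_ord // => /eqP.
Qed.

Lemma prim_root_eq_expr (R : fieldType) n (z y r : R) :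
  n.-primitive_root z -> r != 0 -> y ^+ n = r ^+ n -> exists i : 'I_n, y = z ^+ i * r.
Proof.
move=> z_prim r_neq0 yr; have : (y / r) ^+ n = 1 by rewrite expr_div_n yr divff ?expf_neq0.
by case/(prim_rootP z_prim) => i yr_i; exists i; rewrite -yr_i divfK.
Qed.

Lemma prim_root_coprime_expr_gen (R : fieldType) n (z : R) k :
  n.-primitive_root z -> coprime k n -> exists j, (z ^+ k) ^+ j = z.
Proof.
move=> z_prim co_kn; have zk_prim : n.-primitive_root (z ^+ k).
  by rewrite prim_root_exp_coprime.
by have [j zj] := prim_rootP zk_prim (prim_expr_order z_prim); exists j.
Qed.

Lemma gal_alg (F : fieldType) (L : splittingFieldType F) (E : {vspace L}) (g : gal_of E) c :
  g c%:A = c%:A.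
Proof. by rewrite linearZ /= rmorph1. Qed.

Lemma mem_Gal1 (F : fieldType) (L : splittingFieldType F) (E : {subfield L}) (g : gal_of E) :
  (g \in 'Gal(E / 1))%g.
Proof. by rewrite gal_kAut ?sub1v // kAut1E limg_gal. Qed.

Lemma dim_Fadjoin_root_le (F : fieldType) (L : fieldExtType F) (K : {subfield L}) beta n :
  (0 < n)%N -> beta ^+ n \in K -> (\dim <<K; beta>> <= n * \dim K)%N.
Proof.
move=> n_gt0 Kbn; rewrite dim_Fadjoin leq_mul2r -ltnS -size_minPoly; apply/orP; right.
have q_neq0 : 'X^n - (beta ^+ n)%:P != 0 by rewrite -size_poly_eq0 size_XnsubC.
have Kq : 'X^n - (beta ^+ n)%:P \is a polyOver K by rewrite polyOverXnsubC.
have q_beta : root ('X^n - (beta ^+ n)%:P) beta by rewrite rootE !hornerE subrr.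
by rewrite -(size_XnsubC (beta ^+ n) n_gt0) dvdp_leq // minPoly_dvdp.
Qed.

Lemma cyclic_ext_of_order (F : fieldType) (L : splittingFieldType F) (E : {subfield L})
    (tau : gal_of E) :
  (\dim E <= #[tau]%g)%N -> cyclic_ext_of_degree E #[tau]%g.
Proof.
move=> dimE_le; have := dim_fixedField <[tau]>%G; rewrite /= -orderE => dim_tau.
have fix1 : fixedField <[tau]>%g = 1%VS.
  apply/eqP; rewrite eq_sym eqEdim sub1v dimv1 /=.
  rewrite leqNgt; apply/negP => /ltn_Pdiv/(_ (adim_gt0 E)).
  by rewrite -dim_tau ltnNge dimE_le.
rewrite /cyclic_ext_of_degree dim_tau fix1 dimv1 divn1; split=> //.
- by rewrite -fix1 fixedField_galois.
- by rewrite -{1}fix1 gal_fixedField cycle_cyclic.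
Qed.

Lemma normalField_aimg_sub (F : fieldType) (L : splittingFieldType F) (E : {subfield L})
    (f : 'AEnd(L)) :
  normalField 1 E -> (f @: E <= E)%VS.
Proof.
move=> nE; rewrite -kAut1E (normalField_kAut (E := fullv) _ nE) ?kAut1E ?subvf //.
by rewrite andbT; apply: sub1v.
Qed.

Lemma order_prime_sq (gT : finGroupType) (x : gT) p : prime p ->
  (x ^+ (p * p) = 1)%g -> (x ^+ p != 1)%g -> #[x]%g = (p * p)%N.
Proof.
move=> p_pr xpp xp_neq1; have : (#[x]%g %| p ^ 2)%N by rewrite order_dvdn -mulnn xpp.
case/(dvdn_pfactor _ _ p_pr) => m; rewrite leq_eqVlt ltnS => /orP[/eqP -> | le_m1] ox.
  by rewrite mulnn.
by case/negP: xp_neq1; rewrite -order_dvdn ox -{2}(expn1 p) dvdn_exp2l.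
Qed.

Section CyclicDegreeP.
Variables (F : fieldType) (L : splittingFieldType F) (p : nat) (xi : F).
Variables (K : {subfield L}) (sigma : gal_of K).
Hypotheses (p_pr : prime p) (xi_prim : p.-primitive_root xi).
Hypotheses (sigma_gen : generator 'Gal(K / 1) sigma) (sigma_order : #[sigma]%g = p).

Local Notation z := (xi%:A : L).

Lemma z_prim : p.-primitive_root z.
Proof. by rewrite (fmorph_primitive_root (in_alg L)). Qed.

Lemma scalar_exprE k : (xi ^+ k)%:A = z ^+ k.
Proof. by rewrite -in_algE rmorphXn. Qed.

Lemma z_neq0 : z != 0.
Proof. by rewrite (prim_root_eq0 z_prim) -lt0n (prim_order_gt0 xi_prim). Qed.

Lemma gal_expgE n x : x \in K -> (sigma ^+ n)%g x = iter n sigma x.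
Proof.
move=> Kx; elim: n => [|n IHn]; first by rewrite expg0 gal_id.
by rewrite expgSr galM ?IHn // memv_gal.
Qed.

Lemma iter_gal_mem n x : x \in K -> iter n sigma x \in K.
Proof. by move=> Kx; rewrite -gal_expgE ?memv_gal. Qed.

Lemma iter_gal_order m x : x \in K -> iter (p * m) sigma x = x.
Proof. by move=> Kx; rewrite -gal_expgE // expgM -sigma_order expg_order expg1n gal_id. Qed.

Lemma galNorm_iter x : x \in K -> galNorm 1 K x = \prod_(i < p) iter i sigma x.
Proof.
move=> Kx; rewrite /galNorm (eqP sigma_gen) big_cycle sigma_order.
by apply: eq_bigr => i _; rewrite gal_expgE.
Qed.

Lemma inJ1P g : g != 0 ->
  inJ p sigma 1 g <-> exists2 c, c \in K & sigma g = c ^+ p * g.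
Proof.
rewrite /inJ /rho /= => g_neq0; split=> -[c Kc gc]; exists c => //.
  by rewrite -gc divfK.
by rewrite gc mulfK.
Qed.

Definition partial_norm c n := \prod_(i < n) iter i sigma c.

Lemma partial_norm_mem c n : c \in K -> partial_norm c n \in K.
Proof. by move=> Kc; apply: rpred_prod => i _; apply: iter_gal_mem. Qed.

Lemma partial_norm0 c : partial_norm c 0 = 1.
Proof. exact: big_ord0. Qed.

Lemma partial_normS c n : partial_norm c n.+1 = c * sigma (partial_norm c n).
Proof. by rewrite /partial_norm big_ord_recl rmorph_prod. Qed.

Lemma partial_normX c m n : partial_norm (c ^+ m) n = partial_norm c n ^+ m.
Proof.
rewrite /partial_norm -prodrXl; apply: eq_bigr => i _.
by elim: (i : nat) => //= k ->; rewrite rmorphXn.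
Qed.

Lemma partial_norm_order c : c \in K -> partial_norm c p = galNorm 1 K c.
Proof. by move=> Kc; rewrite galNorm_iter. Qed.

Lemma iter_gal_cocycle c b n : sigma b = c * b -> iter n sigma b = partial_norm c n * b.
Proof.
move=> sb; elim: n => [|n IHn]; first by rewrite partial_norm0 mul1r.
by rewrite iterS IHn rmorphM /= sb partial_normS mulrCA mulrA.
Qed.

(* [kindex] is a choice, pinned down here: two p-th roots of N(g) differ by a
   power of z, which sigma fixes, so they have the same eigenvalue. *)
Lemma kindex_eq g d k : g != 0 -> (k < p)%N -> d \in K ->
  d ^+ p = galNorm 1 K g -> sigma d = z ^+ k * d -> kindex p xi sigma g = k.
Proof.
move=> g_neq0 lt_kp Kd dp sd.
pose P e := (e < p)%N /\ exists2 d, d \in K &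
  d ^+ p = galNorm 1 K g /\ sigma d = (xi ^+ e)%:A * d.
have Pk : P k by split=> //; exists d; rewrite // scalar_exprE.
have := epsilon_spec (inhabits 0%N) P (ex_intro _ k Pk).
rewrite /kindex -/P; move: (epsilon _ _) => e [lt_ep [d' _ [d'p sd']]].
have d_neq0 : d != 0.
  apply: contraNneq g_neq0 => d0; move: dp.
  by rewrite d0 expr0n gtn_eqF ?(prim_order_gt0 xi_prim) // => /esym/eqP; rewrite galNorm_eq0.
have [j d'E] := prim_root_eq_expr z_prim d_neq0 (etrans d'p (esym dp)).
have zjd_neq0 : z ^+ j * d != 0 by rewrite mulf_neq0 ?expf_neq0 ?z_neq0.
move: sd'; rewrite d'E rmorphM /= -scalar_exprE gal_alg !scalar_exprE sd mulrCA.
move=> /(mulIf zjd_neq0)/eqP.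
by rewrite (eq_prim_root_expr z_prim) !modn_small // => /eqP.
Qed.

Lemma kindex_galNorm_expr g c k : g \in K -> g != 0 -> c \in K ->
  sigma g = c ^+ p * g -> galNorm 1 K c = z ^+ k -> (k < p)%N -> kindex p xi sigma g = k.
Proof.
move=> Kg g_neq0 Kc sg Nc lt_kp.
have shift : c ^+ p * \prod_(i < p) sigma (partial_norm c i) =
             galNorm 1 K c * \prod_(i < p) partial_norm c i.
  transitivity (\prod_(i < p.+1) partial_norm c i); last first.
    by rewrite big_ord_recr /= partial_norm_order // mulrC.
  rewrite big_ord_recl /= partial_norm0 mul1r.
  by under [RHS]eq_bigr do rewrite partial_normS; rewrite big_split prodr_const card_ord.
apply: (kindex_eq (d := g * \prod_(i < p) partial_norm c i)) => //.
- by rewrite rpredM ?rpred_prod // => i _; apply: partial_norm_mem.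
- rewrite galNorm_iter //; under [RHS]eq_bigr do rewrite (iter_gal_cocycle _ sg) partial_normX.
  by rewrite big_split prodrXl prodr_const card_ord exprMn mulrC.
- by rewrite rmorphM /= rmorph_prod sg mulrAC shift Nc -mulrA [_ * g]mulrC.
Qed.

Lemma kindex_cocycle g c : g \in K -> g != 0 -> c \in K -> sigma g = c ^+ p * g ->
  (kindex p xi sigma g < p)%N /\ galNorm 1 K c = z ^+ kindex p xi sigma g.
Proof.
move=> Kg g_neq0 Kc sg.
have : galNorm 1 K c ^+ p = 1.
  rewrite -galNormX -(mulfK g_neq0 (c ^+ p)) -sg galNormM galNormV.
  by rewrite galNorm_gal ?mem_Gal1 // mulfV ?galNorm_eq0.
case/(prim_rootP z_prim) => k Nc.
by rewrite (kindex_galNorm_expr Kg g_neq0 Kc sg Nc).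
Qed.

Definition Upsilon := exists2 x, (x \in K) && (x != 0) & galNorm 1 K x = xi%:A.

Lemma Upsilon_of_galNorm x k : x \in K -> x != 0 -> galNorm 1 K x = z ^+ k ->
  z ^+ k != 1 -> Upsilon.
Proof.
move=> Kx x_neq0 Nx zk_neq1; have co_kp : coprime k p.
  by rewrite coprime_sym prime_coprime // (prim_order_dvd z_prim).
have [j zkj] := prim_root_coprime_expr_gen z_prim co_kp.
by exists (x ^+ j); rewrite ?rpredX ?expf_neq0 // galNormX Nx zkj.
Qed.

Lemma Upsilon_J1_kindex : Upsilon ->
  exists2 delta, (delta \in K) && (delta != 0) &
    inJ p sigma 1 delta /\ kindex p xi sigma delta != 0%N.
Proof.
case=> x /andP[Kx x_neq0] Nx.
have Nxp : galNorm 1 K (x ^+ p) == 1 by rewrite galNormX Nx (prim_expr_order z_prim).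
have [b [Kb b_neq0] xpE] := Hilbert's_theorem_90 sigma_gen (rpredX p Kx) Nxp.
have sb : sigma b^-1 = x ^+ p * b^-1 by rewrite fmorphV /= xpE mulrAC divff // mul1r.
exists b^-1; first by rewrite rpredV Kb invr_eq0.
split; first by apply/inJ1P; [rewrite invr_eq0 | exists x].
by rewrite (@kindex_galNorm_expr _ x 1) ?rpredV ?invr_eq0 ?prime_gt1 ?expr1.
Qed.

Lemma J1_kindex_eq0 g : ~ Upsilon -> g \in K -> g != 0 -> inJ p sigma 1 g ->
  kindex p xi sigma g = 0%N.
Proof.
move=> noU Kg g_neq0 /(inJ1P g_neq0)[c Kc sg].
have [lt_ep Nc] := kindex_cocycle Kg g_neq0 Kc sg.
have c_neq0 : c != 0 by rewrite -(galNorm_eq0 1 K) Nc expf_neq0 ?z_neq0.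
have : z ^+ kindex p xi sigma g == 1.
  by apply/negPn/negP => zk_neq1; apply: noU; apply: Upsilon_of_galNorm Nc zk_neq1.
by rewrite -(prim_order_dvd z_prim) /dvdn modn_small // => /eqP.
Qed.

Lemma iter_gal_alg_mul n c y : iter n sigma (c%:A * y) = c%:A * iter n sigma y.
Proof. by elim: n => //= n ->; rewrite rmorphM /= gal_alg. Qed.

Section AdjoinRoot.
Hypothesis dimK : \dim K = p.
Variables (delta beta : L).
Hypotheses (Kdelta : delta \in K) (delta_neq0 : delta != 0) (beta_p : beta ^+ p = delta).

Local Notation E := <<K; beta>>%AS.
Local Notation tau := (gal E sigma).

Lemma beta_neq0 : beta != 0.
Proof. by apply: contraNneq delta_neq0 => b0; rewrite -beta_p b0 expr0n gtn_eqF ?prime_gt0. Qed.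

Lemma cocycle_root_expr c : sigma beta = c * beta -> sigma delta = c ^+ p * delta.
Proof. by move=> sb; rewrite -beta_p rmorphXn /= sb exprMn. Qed.

Lemma kindex_adjoin_cocycle c : c \in K -> sigma beta = c * beta ->
  (kindex p xi sigma delta < p)%N /\
  iter p sigma beta = z ^+ kindex p xi sigma delta * beta.
Proof.
move=> Kc sb; have [lt_ep Nc] := kindex_cocycle Kdelta delta_neq0 Kc (cocycle_root_expr sb).
by rewrite (iter_gal_cocycle _ sb) partial_norm_order // Nc.
Qed.

Lemma adjoin_stable c : c \in K -> sigma beta = c * beta -> (sigma @: E <= E)%VS.
Proof.
move=> Kc sb; rewrite aimg_adjoin; apply/FadjoinP; split.
  by rewrite /= limg_gal subv_adjoin.
by rewrite sb rpredM ?memv_adjoin ?(subvP (subv_adjoin K beta)).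
Qed.

Section Stable.
Hypothesis sE : (sigma @: E <= E)%VS.

Lemma gal_adjoin_expgE n x : x \in E -> (tau ^+ n)%g x = iter n sigma x.
Proof.
move=> Ex; elim: n => [|n IHn]; first by rewrite expg0 gal_id.
by rewrite expgSr galM ?IHn ?galK // -IHn memv_gal.
Qed.

Lemma gal_adjoin_expg_eq1 m : ((tau ^+ (p * m))%g == 1%g) = (iter (p * m) sigma beta == beta).
Proof.
have tauK : (tau ^+ (p * m))%g \in 'Gal(E / K)%g.
  rewrite gal_kHom ?subv_adjoin //; apply/kAHomP => x Kx.
  by rewrite gal_adjoin_expgE ?(subvP (subv_adjoin K beta)) // iter_gal_order.
by rewrite (gal_adjoin_eq tauK (group1 _)) gal_id gal_adjoin_expgE ?memv_adjoin.
Qed.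

Lemma gal_adjoin_notin_fix : tau \notin 'Gal(E / K)%g.
Proof.
apply/negP => tauK; have sigma_neq1 : sigma != 1%g.
  by apply: contraTneq (prime_gt1 p_pr) => s1; rewrite -sigma_order s1 order1.
case/negP: sigma_neq1; apply/gal_eqP => x Kx; have Ex := subvP (subv_adjoin K beta) x Kx.
by rewrite gal_id -(galK sE Ex) (fixed_gal (subv_adjoin K beta) tauK Kx).
Qed.

End Stable.

Lemma cyclic_adjoin_of_kindex : inJ p sigma 1 delta -> kindex p xi sigma delta != 0%N ->
  cyclic_ext_of_degree E (p ^ 2).
Proof.
move=> /(inJ1P delta_neq0)[c0 Kc0 sd] e_neq0.
have c0b_neq0 : c0 * beta != 0.
  rewrite mulf_neq0 ?beta_neq0 //; apply: contraNneq delta_neq0 => c0_0.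
  by rewrite -(fmorph_eq0 sigma) /= sd c0_0 expr0n gtn_eqF ?prime_gt0 ?mul0r.
have [j sbj] : exists j : 'I_p, sigma beta = z ^+ j * (c0 * beta).
  by apply: prim_root_eq_expr z_prim c0b_neq0 _; rewrite -rmorphXn /= beta_p sd exprMn beta_p.
have Kc : z ^+ j * c0 \in K by rewrite rpredM // -scalar_exprE rpredZ ?rpred1.
have sb : sigma beta = (z ^+ j * c0) * beta by rewrite sbj mulrA.
have [lt_ep itp] := kindex_adjoin_cocycle Kc sb.
have sE := adjoin_stable Kc sb.
set e := kindex p xi sigma delta in e_neq0 lt_ep itp *.
have itpm m : iter (p * m) sigma beta = z ^+ (e * m) * beta.
  elim: m => [|m IHm]; first by rewrite !muln0 expr0 mul1r.
  rewrite mulnS iterD IHm -scalar_exprE iter_gal_alg_mul scalar_exprE itp.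
  by rewrite mulrA -exprD mulnS addnC.
have tau_pp : (tau ^+ (p * p) = 1)%g.
  apply/eqP; rewrite gal_adjoin_expg_eq1 // itpm mulnC exprM (prim_expr_order z_prim).
  by rewrite expr1n mul1r.
have tau_p : (tau ^+ p != 1)%g.
  rewrite -[p in (tau ^+ p)%g]muln1 gal_adjoin_expg_eq1 // muln1 itp.
  rewrite -{2}[beta]mul1r (inj_eq (mulIf beta_neq0)).
  by rewrite -(prim_order_dvd z_prim) gtnNdvd ?lt0n.
rewrite -mulnn -(order_prime_sq p_pr tau_pp tau_p); apply: cyclic_ext_of_order.
by rewrite (order_prime_sq p_pr tau_pp tau_p) -{2}dimK dim_Fadjoin_root_le ?beta_p ?prime_gt0.
Qed.

Lemma adjoin_cocycle_of_abelian : galois 1 E -> abelian 'Gal(E / 1)%g ->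
  (sigma @: E <= E)%VS -> exists2 c, c \in K & sigma beta = c * beta.
Proof.
move=> galE abE sE; have Eb := memv_adjoin K beta.
have galKE : galois K E by apply: galoisS galE; rewrite sub1v subv_adjoin.
have fixK : (fixedField 'Gal(E / K)%g <= K)%VS by rewrite (galois_fixedField galKE).
exists (sigma beta / beta); last by rewrite divfK ?beta_neq0.
apply: (subvP fixK); apply/fixedFieldP.
  by rewrite rpredM ?rpredV // -(galK sE Eb) memv_gal.
move=> g gK; have [i gb] : exists i : 'I_p, g beta = z ^+ i * beta.
  apply: prim_root_eq_expr z_prim beta_neq0 _.
  by rewrite -rmorphXn /= beta_p (fixed_gal (subv_adjoin K beta) gK Kdelta).
have comm : (tau * g = g * tau)%g by apply: (centsP abE); rewrite mem_Gal1.
have gsb : g (sigma beta) = z ^+ i * sigma beta.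
  have Ezb : z ^+ i * beta \in E by rewrite rpredM // -scalar_exprE rpredZ ?rpred1.
  rewrite -[in LHS](galK sE Eb) -(galM _ _ Eb) comm (galM _ _ Eb) gb (galK sE Ezb).
  by rewrite rmorphM /= -scalar_exprE gal_alg.
by rewrite rmorphM fmorphV /= gsb gb invfM mulrACA divff ?mul1r // expf_neq0 ?z_neq0.
Qed.

Lemma kindex_of_cyclic_adjoin : cyclic_ext_of_degree E (p ^ 2) ->
  inJ p sigma 1 delta /\ kindex p xi sigma delta != 0%N.
Proof.
case=> galE cycE dimE; have [_ _ /(normalField_aimg_sub sigma) sE] := and3P galE.
have [c Kc sb] := adjoin_cocycle_of_abelian galE (cyclic_abelian cycE) sE.
split; first by apply/inJ1P => //; exists c; rewrite // (cocycle_root_expr sb).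
apply/negP => /eqP e0; have [_] := kindex_adjoin_cocycle Kc sb.
rewrite e0 expr0 mul1r => itp.
have tau_p : (tau ^+ p = 1)%g by apply/eqP; rewrite -[p]muln1 gal_adjoin_expg_eq1 // muln1 itp.
have tau_neq1 : tau != 1%g by apply: contraNneq (gal_adjoin_notin_fix sE) => ->; rewrite group1.
have galKE : galois K E by apply: galoisS galE; rewrite sub1v subv_adjoin.
have card_EK : #|'Gal(E / K)%g| = p.
  by rewrite -(galois_dim galKE) dimE dimK expnS expn1 mulKn ?prime_gt0.
have : (<[tau]> == 'Gal(E / K))%g.
  rewrite (eq_subG_cyclic cycE) ?cycle_subG ?mem_Gal1 ?galS ?sub1v //.
  by rewrite -orderE (nt_prime_order p_pr tau_p tau_neq1) card_EK.
by move/eqP => tauE; case/negP: (gal_adjoin_notin_fix sE); rewrite -tauE cycle_id.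
Qed.

End AdjoinRoot.

End CyclicDegreeP.

Section Kummer.
Variables (F : fieldType) (L : splittingFieldType F) (p : nat) (xi a : F) (alpha : L).
Variable sigma : gal_of <<1; alpha>>%VS.
Hypotheses (p_pr : prime p) (xi_prim : p.-primitive_root xi) (a_neq0 : a != 0).
Hypotheses (alpha_p : alpha ^+ p = a%:A) (sigma_alpha : sigma alpha = xi%:A * alpha).

Local Notation K := <<1; alpha>>%AS.
Local Notation z := (xi%:A : L).

Lemma alpha_neq0 : alpha != 0.
Proof.
apply: contraNneq a_neq0 => alpha0; move: alpha_p.
by rewrite alpha0 expr0n gtn_eqF ?prime_gt0 // => /esym/eqP; rewrite scaler_eq0 oner_eq0 orbF.
Qed.

Lemma iter_sigma_alpha n : iter n sigma alpha = z ^+ n * alpha.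
Proof.
elim: n => [|n IHn]; first by rewrite mul1r.
by rewrite iterS IHn -scalar_exprE rmorphM /= gal_alg sigma_alpha scalar_exprE mulrA -exprSr.
Qed.

Lemma gal_alpha_eq (g h : gal_of K) : (g == h) = (g alpha == h alpha).
Proof. exact: (gal_adjoin_eq (K := 1%AS) (mem_Gal1 g) (mem_Gal1 h)). Qed.

Lemma sigma_generator : generator 'Gal(K / 1) sigma.
Proof.
apply/eqP/setP => g; apply/idP/idP => [_ | _]; last exact: mem_Gal1.
have [i galpha] : exists i : 'I_p, g alpha = z ^+ i * alpha.
  apply: prim_root_eq_expr (z_prim _ xi_prim) alpha_neq0 _.
  by rewrite -rmorphXn /= alpha_p gal_alg.
have /eqP -> : g == (sigma ^+ i)%g.
  by rewrite gal_alpha_eq gal_expgE ?memv_adjoin // iter_sigma_alpha galpha.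
exact: mem_cycle.
Qed.

Lemma sigma_order : #[sigma]%g = p.
Proof.
apply: nt_prime_order => //.
  apply/eqP; rewrite gal_alpha_eq gal_expgE ?memv_adjoin // iter_sigma_alpha gal_id.
  by rewrite (prim_expr_order (z_prim _ xi_prim)) mul1r.
apply: contraTneq (prime_gt1 p_pr) => sigma1.
have : z * alpha == alpha by rewrite -sigma_alpha sigma1 gal_id.
rewrite -{2}[alpha]mul1r (inj_eq (mulIf alpha_neq0)) -[z]expr1.
by rewrite -(prim_order_dvd (z_prim _ xi_prim)) dvdn1 => /eqP ->.
Qed.

Lemma galNorm_alpha : odd p -> galNorm 1 K alpha = alpha ^+ p.
Proof.
move=> p_odd; rewrite (galNorm_iter sigma_generator sigma_order) ?memv_adjoin //.
under eq_bigr do rewrite iter_sigma_alpha.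
rewrite big_split /= prodrXr prodr_const card_ord.
have -> : (\sum_(i < p) i = 'C(p, 2))%N by rewrite -bin2_sum big_mkord.
have p_gt2 : (2 < p)%N by rewrite ltn_neqAle prime_gt1 // andbT; apply: contraTneq p_odd => <-.
have : (p %| 'C(p, 2))%N by rewrite prime_dvd_bin ?p_gt2.
by rewrite (prim_order_dvd (z_prim L xi_prim)) => /eqP ->; rewrite mul1r.
Qed.

Lemma kindex_alpha : odd p -> kindex p xi sigma alpha = 1%N.
Proof.
move=> p_odd; apply: (kindex_eq xi_prim alpha_neq0 (prime_gt1 p_pr) (memv_adjoin _ alpha)).
  by rewrite galNorm_alpha.
by rewrite sigma_alpha expr1.
Qed.

Lemma inJ2_alpha : inJ p sigma 2 alpha.
Proof.
exists 1; first exact: rpred1.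
by rewrite /= /rho sigma_alpha (mulfK alpha_neq0) gal_alg divff ?expr1n // (z_neq0 _ xi_prim).
Qed.

Lemma Upsilon_of_inJ1_alpha : odd p -> inJ p sigma 1 alpha -> Upsilon xi K.
Proof.
move=> p_odd /(inJ1P p sigma alpha_neq0)[c Kc sa].
have [_] := kindex_cocycle xi_prim sigma_generator sigma_order
  (memv_adjoin _ alpha) alpha_neq0 Kc sa.
rewrite kindex_alpha // expr1 => Nc; exists c => //.
by rewrite Kc -(galNorm_eq0 1 K) Nc (z_neq0 _ xi_prim).
Qed.

End Kummer.

Theorem lemma5 (F : fieldType) (L : splittingFieldType F) (p : nat) (xi a : F)
  (alpha : L) (sigma : gal_of <<1; alpha>>%VS) :
  prime p -> odd p -> p.-primitive_root xi ->
  a != 0 -> alpha ^+ p = a%:A -> \dim <<1; alpha>>%VS = p ->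
  sigma alpha = xi%:A * alpha ->
  let K := <<1; alpha>>%VS in
  let Upsilon := exists2 x, (x \in K) && (x != 0) & galNorm 1%VS K x = xi%:A in
  (Upsilon ->
     (exists2 delta, (delta \in K) && (delta != 0) &
        inJ p sigma 1 delta /\ kindex p xi sigma delta != 0%N) /\
     (forall delta beta : L, delta \in K -> delta != 0 -> beta ^+ p = delta ->
        (inJ p sigma 1 delta /\ kindex p xi sigma delta != 0%N) <->
        cyclic_ext_of_degree <<K; beta>>%VS (p ^ 2)%N)) /\
  (~ Upsilon ->
     [/\ inJ p sigma 2 alpha, ~ inJ p sigma 1 alpha,
         kindex p xi sigma alpha != 0%N &
         forall gamma : L, gamma \in K -> gamma != 0 -> inJ p sigma 1 gamma ->
           kindex p xi sigma gamma = 0%N]).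
Proof.
move=> p_pr p_odd xi_prim a_neq0 alpha_p dimK sigma_alpha K Ups.
have sigma_gen := sigma_generator p_pr xi_prim a_neq0 alpha_p sigma_alpha.
have sigma_ord := sigma_order p_pr xi_prim a_neq0 alpha_p sigma_alpha.
split=> [Ups_xi | not_Ups_xi].
- split; first exact: Upsilon_J1_kindex Ups_xi.
  move=> delta beta Kdelta delta_neq0 beta_p; split.
  + by case; apply: cyclic_adjoin_of_kindex.
  + exact: kindex_of_cyclic_adjoin.
- split.
  + exact: inJ2_alpha p_pr xi_prim a_neq0 alpha_p sigma_alpha.
  + by move/(Upsilon_of_inJ1_alpha p_pr xi_prim a_neq0 alpha_p sigma_alpha p_odd).
  + by rewrite (kindex_alpha p_pr xi_prim a_neq0 alpha_p sigma_alpha p_odd).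
  + by move=> gamma; apply: J1_kindex_eq0.
Qed.
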